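(* Let $R$ be a generalized p.q.-Baer $*$-ring and $x\in R$. Then there exist a central projection $e\in R$ and $n\in\mathbb N$ such that (1) $x^ne=x^n$, and (2) for every $y\in R$, $(xR)^ny=\{0\}$ if and only if $ey=0$.
   Context: A $*$-ring is a ring with an involution; a projection is $e$ with $e=e^*=e^2$; a central projection is a projection commuting with all elements. $r_R(S)=\{a\in R: sa=0\ \forall s\in S\}$. A $*$-ring $R$ is a generalized p.q.-Baer $*$-ring if for every $x\in R$ there are $n\in\mathbb N$ and a projection $e$ with $r_R((xR)^n)=eR$ (equivalently, for every principal ideal $I$, $r_R(I^n)=eR$ for some $n$ and projection $e$). *)

From HB Require Import structures.
From mathcomp Require Import all_boot all_order all_algebra.
Set Implicit Arguments. Unset Strict Implicit. Unset Printing Implicit Defensive.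
Import GRing.Theory.
Local Open Scope ring_scope.

Definition involution (R : ringType) (star : R -> R) : Prop :=
  [/\ forall a b : R, star (a + b) = star a + star b,
      forall a b : R, star (a * b) = star b * star a
    & forall a : R, star (star a) = a].

Definition projection (R : ringType) (star : R -> R) (e : R) : Prop :=
  e = star e /\ e * e = e.

Definition central (R : ringType) (e : R) : Prop :=
  forall a : R, e * a = a * e.

(* Elements of (xR)^n are the products (x r_1)(x r_2)...(x r_n).
   [annih_pow x n a] : a belongs to r_R((xR)^n), i.e. (xR)^n a = {0}. *)
Definition annih_pow (R : ringType) (x : R) (n : nat) (a : R) : Prop :=
  forall r : 'I_n -> R, (\prod_(i < n) (x * r i)) * a = 0.

Definition gen_pq_baer (R : ringType) (star : R -> R) : Prop :=
  forall x : R, exists n : nat, exists e : R,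
    (0 < n)%N /\ projection star e /\
    (forall a : R, annih_pow x n a <-> exists b : R, a = e * b).

From mathcomp Require Import all_boot all_order all_algebra.
Set Implicit Arguments. Unset Strict Implicit. Unset Printing Implicit Defensive.
Local Open Scope ring_scope.
Import GRing.Theory.

(* The annihilator f R = r_R((xR)^n) is also a left ideal, so r f = f r f for
   every r; applying the involution shows that the projection f is central.
   Since x^n f = 0, the complementary central projection e = 1 - f satisfies
   x^n e = x^n, and r_R((xR)^n) = f R is exactly the set of y with e y = 0. *)

Section Annihilator.

Variables (R : ringType) (x : R).

Lemma annih_powS (n : nat) (a : R) :
  annih_pow x n.+1 a <-> forall r : R, annih_pow x n (x * r * a).
Proof.
split=> [Ha r rs | Ha rr].
- pose rr (i : 'I_n.+1) := if insub (val i) is Some j then rs j else r.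
  have := Ha rr; rewrite big_ord_recr /= -!mulrA.
  have -> : rr ord_max = r by rewrite /rr insubF ?ltnn.
  by under eq_bigr do rewrite /rr /= valK.
- by rewrite big_ord_recr /= -mulrA Ha.
Qed.

Lemma annih_pow_mull (n : nat) (r a : R) :
  (0 < n)%N -> annih_pow x n a -> annih_pow x n (r * a).
Proof.
case: n => [//|n] _ /annih_powS Ha; apply/annih_powS => s.
by rewrite mulrA -(mulrA x); exact: Ha.
Qed.

Lemma annih_pow_exprM (n : nat) (a : R) : annih_pow x n a -> x ^+ n * a = 0.
Proof.
move/(_ (fun _ => 1)); under eq_bigr do rewrite mulr1.
by rewrite prodr_const card_ord.
Qed.

End Annihilator.

Section StarRing.

Variables (R : ringType) (star : R -> R).
Hypothesis Hstar : involution star.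

Lemma star0 : star 0 = 0.
Proof.
case: Hstar => starD _ _.
by apply: (addrI (star 0)); rewrite -starD !addr0.
Qed.

Lemma starN (a : R) : star (- a) = - star a.
Proof.
case: Hstar => starD _ _.
by apply/eqP; rewrite -subr_eq0 opprK -starD addNr star0.
Qed.

Lemma star1 : star 1 = 1.
Proof.
case: Hstar => _ starM starK.
by rewrite -[LHS]mulr1 -{2}(starK 1) -starM mulr1 starK.
Qed.

Lemma projection_1sub (e : R) : projection star e -> projection star (1 - e).
Proof.
case: Hstar => starD _ _ [se ee]; split; first by rewrite starD starN star1 -se.
by rewrite mulrBr mulr1 mulrBl mul1r ee subrr subr0.
Qed.

Lemma projection_central (e : R) :
  projection star e -> (forall r : R, exists b : R, r * e = e * b) -> central e.
Proof.
case: Hstar => _ starM starK [se ee] eR.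
have reE r : r * e = e * r * e by have [b rE] := eR r; rewrite -mulrA rE mulrA ee.
move=> r; have := congr1 star (reE (star r)).
by rewrite !starM starK -se => ->; rewrite mulrA -reE.
Qed.

End StarRing.

Lemma central_1sub (R : ringType) (e : R) : central e -> central (1 - e).
Proof. by move=> ce a; rewrite mulrBl mulrBr mul1r mulr1 ce. Qed.

Theorem mainTheorem4 (R : ringType) (star : R -> R)
  (Hstar : involution star) (HR : gen_pq_baer star) (x : R) :
  exists e : R, exists n : nat,
    [/\ projection star e, central e, (0 < n)%N,
        x ^+ n * e = x ^+ n
      & forall y : R, annih_pow x n y <-> e * y = 0].
Proof.
have [n [f [n_gt0 [pf annE]]]] := HR x.
have f_annih : annih_pow x n f by apply/annE; exists 1; rewrite mulr1.
have cf : central f.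
  apply: (projection_central Hstar pf) => r.
  by apply/annE; exact: annih_pow_mull.
exists (1 - f), n; split => //.
- exact: projection_1sub.
- exact: central_1sub.
- by rewrite mulrBr mulr1 annih_pow_exprM // subr0.
- move=> y; rewrite mulrBl mul1r; split.
    by case/annE=> b ->; rewrite mulrA pf.2 subrr.
  by move/eqP; rewrite subr_eq0 => /eqP yE; apply/annE; exists y.
Qed.
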